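(* Let $M\ge 1$ be an integer, let $\alpha\ge 1$ be real, let $z$ be a real number with $|z|<2$, and let $p_1,\dots,p_M$ and $b_1,\dots,b_M$ be integers such that each $p_m$ is even and each $b_m$ is odd (i.e. $p_m\in 2\mathbb{Z}$ and $b_m-1\in 2\mathbb{Z}$). Define $$y = z + \alpha\sum_{m=1}^{M} p_m b_m .$$ Then $$z=\begin{cases} (y \bmod 4\alpha)-2\alpha, & \text{if } \tfrac12\sum_{m=1}^M p_m \text{ is odd},\\[2pt] \big((y+2\alpha) \bmod 4\alpha\big)-2\alpha, & \text{otherwise}.\end{cases}$$
   Context: For a real number $u$ and $a>0$, $u \bmod a$ denotes the unique element of $[0,a)$ congruent to $u$ modulo $a$, i.e. $u \bmod a = u - a\lfloor u/a\rfloor$. *)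

From Stdlib Require Import Reals ZArith List Lra Lia.
Open Scope R_scope.

(* floor of a real number: Int_part x = up x - 1 is the unique integer k
   with k <= x < k + 1. *)
Definition rfloor (x : R) : Z := Int_part x.

Definition rmod (u a : R) : R := u - a * IZR (rfloor (u / a)).

Definition zsum (f : nat -> Z) (M : nat) : Z :=
  fold_right Z.add 0%Z (map f (seq 1 M)).

(* Each [p_m] is even and each [b_m - 1] is even, so [p_m b_m = p_m + p_m (b_m - 1)] is
   congruent to [p_m] modulo 4.  Hence [sum p_m b_m = 2Q + 4K] with [Q = (sum p_m)/2], and
   [y] (if [Q] is odd) or [y + 2 alpha] (if [Q] is even) equals [4 alpha n + (z + 2 alpha)]
   for an integer [n].  As [|z| < 2 <= 2 alpha], the term [z + 2 alpha] lies in
   [[0, 4 alpha)], so it is the residue modulo [4 alpha]. *)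
From Stdlib Require Import Reals ZArith List Lra Lia.
Open Scope R_scope.

Local Notation lsum f l := (fold_right Z.add 0%Z (map f l)).

Lemma even_mul_odd_mod4 (p b : Z) :
  Z.Even p -> Z.Odd b -> exists k, (p * b = p + 4 * k)%Z.
Proof.
  intros [q ->] [c ->]. exists (q * c)%Z. ring.
Qed.

Lemma lsum_even (p : nat -> Z) (l : list nat) :
  (forall m, In m l -> Z.Even (p m)) -> exists Q, lsum p l = (2 * Q)%Z.
Proof.
  induction l as [|a l IH]; intros Hp.
  - exists 0%Z. reflexivity.
  - destruct IH as [Q HQ]; [intros m Hm; apply Hp; now right|].
    destruct (Hp a (or_introl eq_refl)) as [q Hq].
    exists (q + Q)%Z. cbn [map fold_right]. rewrite HQ, Hq. ring.
Qed.

Lemma lsum_even_mul_odd_mod4 (p b : nat -> Z) (l : list nat) :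
  (forall m, In m l -> Z.Even (p m) /\ Z.Odd (b m)) ->
  exists K, lsum (fun m => (p m * b m)%Z) l = (lsum p l + 4 * K)%Z.
Proof.
  induction l as [|a l IH]; intros Hpb.
  - exists 0%Z. reflexivity.
  - destruct IH as [K HK]; [intros m Hm; apply Hpb; now right|].
    destruct (Hpb a (or_introl eq_refl)) as [Hpa Hba].
    destruct (even_mul_odd_mod4 _ _ Hpa Hba) as [k Hk].
    exists (k + K)%Z. cbn [map fold_right]. rewrite HK, Hk. ring.
Qed.

Lemma double_add_even_shift (Q : Z) :
  exists n, (2 * Q + (if Z.odd Q then 0 else 2) = 4 * n + 2)%Z.
Proof.
  exists (Z.div2 Q). rewrite (Z.div2_odd Q) at 1.
  destruct (Z.odd Q); cbn [Z.b2z]; ring.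
Qed.

Lemma rmod_IZR_mul_add (k : Z) (a x : R) :
  0 < a -> 0 <= x < a -> rmod (IZR k * a + x) a = x.
Proof.
  intros Ha Hx. unfold rmod, rfloor, Int_part.
  replace ((IZR k * a + x) / a) with (IZR k + x / a) by (field; lra).
  assert (Hxa : 0 <= x / a < 1).
  { assert (Hx' : x = x / a * a) by (field; lra).
    split; nra. }
  rewrite <- (up_tech (IZR k + x / a) k); [| lra | rewrite plus_IZR; lra].
  replace (k + 1 - 1)%Z with k by ring. ring.
Qed.

Theorem mainTheorem1 (M : nat) (alpha z : R) (p b : nat -> Z)
  (hM : (1 <= M)%nat) (halpha : 1 <= alpha) (hz : Rabs z < 2)
  (hp : forall m : nat, (1 <= m <= M)%nat -> Z.Even (p m))
  (hb : forall m : nat, (1 <= m <= M)%nat -> Z.Odd (b m)) :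
  let y := z + alpha * IZR (zsum (fun m => (p m * b m)%Z) M) in
  z = (if Z.odd (zsum p M / 2)%Z
       then rmod y (4 * alpha) - 2 * alpha
       else rmod (y + 2 * alpha) (4 * alpha) - 2 * alpha).
Proof.
  intro y. subst y. unfold zsum.
  assert (Hpb : forall m, In m (seq 1 M) -> Z.Even (p m) /\ Z.Odd (b m)).
  { intros m Hm. apply in_seq in Hm. split; [apply hp | apply hb]; lia. }
  destruct (lsum_even_mul_odd_mod4 p b _ Hpb) as [K ->].
  destruct (lsum_even p (seq 1 M)) as [Q ->]; [intros m Hm; apply Hpb, Hm|].
  rewrite Z.mul_comm, Z.div_mul by lia.
  destruct (double_add_even_shift Q) as [n Hn].
  assert (Hres : 0 <= z + 2 * alpha < 4 * alpha) by (apply Rabs_def2 in hz; lra).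
  destruct (Z.odd Q).
  - replace (z + alpha * IZR (Q * 2 + 4 * K))
      with (IZR (n + K) * (4 * alpha) + (z + 2 * alpha)).
    + rewrite rmod_IZR_mul_add; lra.
    + replace (Q * 2 + 4 * K)%Z with (4 * (n + K) + 2)%Z by lia.
      rewrite !plus_IZR, mult_IZR, plus_IZR. ring.
  - replace (z + alpha * IZR (Q * 2 + 4 * K) + 2 * alpha)
      with (IZR (n + K) * (4 * alpha) + (z + 2 * alpha)).
    + rewrite rmod_IZR_mul_add; lra.
    + replace (Q * 2 + 4 * K)%Z with (4 * (n + K))%Z by lia.
      rewrite !mult_IZR, !plus_IZR. ring.
Qed.
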